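(* Let $C_1, \ldots, C_m$ be the strongly connected components of the regulation graph $(A, \mathrm{reg})$, listed in a topological ordering of its strongly-connected-component quotient graph (i.e. whenever some agent of $C_i$ regulates some agent of $C_j$ with $i \neq j$, then $i < j$). Then $(C_1, \ldots, C_m)$ is a modular organisation.
   Context: Let $A$ be a finite set of agents. For each $a \in A$ let $S_a$ be a nonempty finite set, and let $S = \prod_{a \in A} S_a$ be the set of states; for $s \in S$ and $X \subseteq A$, $s|_X$ is the restriction of $s$ to $X$ (extended elementwise to sets). For each $a \in A$ let $\to_a \subseteq S \times S$ be a relation that is either empty or left-total, such that whenever $s \to_a s'$, either $s = s'$ or $s$ and $s'$ differ only in the $a$-component. For $X \subseteq A$ let $\to_X = \bigcup_{a \in X} \to_a$ (so $\to_\emptyset$ is empty) and $\to_X^*$ its reflexive-transitive closure; for $T \subseteq S$, $(T \to_X) = \{ t' : \exists t \in T,\ t \to_X t'\}$. Orbit operator: $\Omega_X(S') = \{ s' : \exists s \in S',\ s \to_X^* s'\}$. Equilibria operator: $\Psi_X(S') = \{ s \in \Omega_X(S') : \forall s' \in S,\ s \to_X^* s' \implies s' \to_X^* s \}$. $M$-relation: for $X, Y \subseteq A$, $X \leadsto Y$ iff for every $S' \subseteq S$, with $T = \Psi_X(\Psi_{X \cup Y}(S'))$, one has $(T \to_Y) \subseteq T$. Regulation: $a_k$ regulates $a_\ell$ (written $a_k \,\mathrm{reg}\, a_\ell$) iff there exist $s, s' \in S$ with $s|_{A \setminus \{a_k\}} = s'|_{A \setminus \{a_k\}}$ and $(\{s\}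 \to_{a_\ell})|_{\{a_\ell\}} \neq (\{s'\} \to_{a_\ell})|_{\{a_\ell\}}$; the regulation graph is the directed graph $(A, \mathrm{reg})$. A modular organisation is an ordered partition $(X_1, \ldots, X_m)$ of $A$ (a sequence of nonempty pairwise disjoint subsets with union $A$) such that for all $1 \le i \le m$, $\left(\bigcup_{j=1}^{i-1} X_j\right) \leadsto X_i$. *)

From mathcomp Require Import all_boot.
Set Implicit Arguments. Unset Strict Implicit. Unset Printing Implicit Defensive.

Section Defs.
Variables (A : finType) (S : A -> finType).

Definition state := {dffun forall a : A, S a}.

Variable step : forall a : A, rel state.

Definition empty_or_total (a : A) : Prop :=
  (forall s s', ~~ step a s s') \/ (forall s, exists s', step a s s').
Definition local_step (a : A) : Prop :=
  forall s s', step a s s' -> s = s' \/ (forall b, b != a -> s b = s' b).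

Definition stepX (X : {set A}) : rel state :=
  fun s t => [exists a in X, step a s t].
Definition reachX (X : {set A}) : rel state := connect (stepX X).

Definition Omega (X : {set A}) (S' : {set state}) : {set state} :=
  [set t | [exists s in S', reachX X s t]].

Definition Psi (X : {set A}) (S' : {set state}) : {set state} :=
  [set s in Omega X S' | [forall t, reachX X s t ==> reachX X t s]].

Definition Mrel (X Y : {set A}) : Prop :=
  forall S' : {set state},
    let T := Psi X (Psi (X :|: Y) S') in
    forall t t', t \in T -> stepX Y t t' -> t' \in T.

Definition succ_proj (l : A) (s : state) : {set S l} :=
  [set (t : state) l | t in [set t | step l s t]].

Definition reg (k l : A) : bool :=
  [exists s : state, exists s' : state,
     [forall b, (b != k) ==> (s b == s' b)] && (succ_proj l s != succ_proj l s')].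

Definition scc (x : A) : {set A} := [set y | connect reg x y && connect reg y x].
Definition is_scc (C : {set A}) : Prop := exists2 x, x \in C & C = scc x.

Definition prefix_union (Xs : seq {set A}) (i : nat) : {set A} :=
  \bigcup_(j < i) nth set0 Xs j.

Definition ordered_partition (Xs : seq {set A}) : Prop :=
  [/\ forall X, X \in Xs -> X != set0,
      forall i j, i < j < size Xs -> [disjoint nth set0 Xs i & nth set0 Xs j]
    & forall a : A, exists2 X, X \in Xs & a \in X].

Definition modular_organisation (Xs : seq {set A}) : Prop :=
  ordered_partition Xs /\
  forall i, i < size Xs -> Mrel (prefix_union Xs i) (nth set0 Xs i).

End Defs.

From mathcomp Require Import all_boot.
Set Implicit Arguments. Unset Strict Implicit. Unset Printing Implicit Defensive.

(* If X contains all regulators of its members, the possible a-successors of a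
   state, for a in X, depend only on its X-components.  Hence the X-dynamics can
   be transported to any state by grafting X-components, so being an
   X-equilibrium depends only on the X-components of a state.  A Y-step with Y
   disjoint from X leaves the X-components unchanged, so it maps the X-equilibria
   of Psi_{X u Y}(S') to X-equilibria of the same set: X ~> Y.  For a topological
   ordering of the strongly connected components, every prefix union is closed
   under regulators and disjoint from the next component. *)

Section ConnectTransport.
Variable T : finType.

Lemma connect_homo (e e' : rel T) (f : T -> T) :
  (forall x y, e x y -> e' (f x) (f y)) ->
  forall x y, connect e x y -> connect e' (f x) (f y).
Proof.
move=> fe x y /connectP [p xp ->]; elim: p x xp => [|z p IHp] x /=.
  by rewrite connect0.
by case/andP=> /fe exz /IHp; apply: connect_trans; apply: connect1.
Qed.

Lemma connect_invariant (T' : Type) (e : rel T) (k : T -> T') :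
  (forall x y, e x y -> k x = k y) -> forall x y, connect e x y -> k x = k y.
Proof.
move=> ke x y /connectP [p xp ->]; elim: p x xp => [|z p IHp] x //=.
by case/andP=> /ke -> /IHp.
Qed.

End ConnectTransport.

Section Dynamics.
Variables (A : finType) (S : A -> finType) (step : forall a : A, rel (state S)).
Hypothesis step_local : forall a, local_step step a.

Definition upstream_closed (X : {set A}) : Prop :=
  forall k l, l \in X -> reg step k l -> k \in X.

Definition equilibrium (X : {set A}) (s : state S) : Prop :=
  forall u, reachX step X s u -> reachX step X u s.

Definition graft (X : {set A}) (w u : state S) : state S :=
  [ffun c => if c \in X then u c else w c].

Lemma step_other (a : A) (s u : state S) b :
  step a s u -> b != a -> s b = u b.
Proof. by case/step_local=> [-> //|]; apply. Qed.

Lemma reachX_out (X : {set A}) (s u : state S) c :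
  reachX step X s u -> c \notin X -> s c = u c.
Proof.
move=> su cX; apply: (connect_invariant (k := fun s : state S => s c)) su.
move=> x y /existsP [a /andP [aX xy]]; apply: step_other xy _.
by apply: contraNneq cX => ->.
Qed.

Lemma reachX_subset (X Z : {set A}) (s u : state S) :
  X \subset Z -> reachX step X s u -> reachX step Z s u.
Proof.
move=> sXZ; apply: connect_sub => x y /existsP [a /andP [aX xy]].
by apply: connect1; apply/existsP; exists a; rewrite (subsetP sXZ).
Qed.

Lemma succ_proj_nonreg (k l : A) (s s' : state S) :
  ~~ reg step k l -> (forall b, b != k -> s b = s' b) ->
  succ_proj step l s = succ_proj step l s'.
Proof.
move=> /existsPn /(_ s) /existsPn /(_ s'); rewrite negb_and negbK => /orP [|/eqP //].
by case/forallPn=> b; rewrite negb_imply => /andP [bk /eqP sb] /(_ b bk).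
Qed.

(* Induction on the number of components where [s] and [s'] differ; each one is
   outside X, hence does not regulate [l]. *)
Lemma succ_proj_upstream (X : {set A}) (l : A) (s s' : state S) :
  upstream_closed X -> l \in X -> (forall c, c \in X -> s c = s' c) ->
  succ_proj step l s = succ_proj step l s'.
Proof.
move=> Xup lX; move Hn: #|[set c | s c != s' c]| => n.
elim: n s Hn => [|n IHn] s Hn sX.
  congr succ_proj; apply/ffunP => c; apply/eqP; apply: contraFT (in_set0 c) => scs.
  by rewrite -(cards0_eq Hn) inE.
have /card_gt0P [b] : 0 < #|[set c | s c != s' c]| by rewrite Hn.
rewrite inE => sbs; have bX : b \notin X by apply: contra sbs => /sX ->.
pose s1 : state S := [ffun c => if c == b then s' c else s c].
transitivity (succ_proj step l s1).
  apply: succ_proj_nonreg => [|c cb]; last by rewrite ffunE (negbTE cb).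
  by apply: contra bX; apply: Xup.
apply: IHn => [|c cX]; last by rewrite ffunE; case: ifP => // _; apply: sX.
have -> : [set c | s1 c != s' c] = [set c | s c != s' c] :\ b.
  by apply/setP => c; rewrite !inE ffunE; case: (eqVneq c b) => [->|]; rewrite ?eqxx.
by move: (cardsD1 b [set c | s c != s' c]); rewrite inE sbs Hn add1n => -[].
Qed.

Lemma step_graft (X : {set A}) (w : state S) (a : A) (s u : state S) :
  upstream_closed X -> a \in X -> step a s u -> step a (graft X w s) (graft X w u).
Proof.
move=> Xup aX su.
have : u a \in succ_proj step a (graft X w s).
  rewrite (@succ_proj_upstream X a _ s) => [|||c cX]; rewrite ?ffunE ?cX //.
  by apply/imsetP; exists u; rewrite ?inE.
case/imsetP=> v; rewrite inE => sv uav; suff -> : graft X w u = v by [].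
apply/ffunP => c; rewrite ffunE; have [->|ca] := eqVneq c a; first by rewrite aX.
rewrite -(step_other sv ca) ffunE; case: ifP => // _; exact: esym (step_other su ca).
Qed.

Lemma reachX_graft (X : {set A}) (w s u : state S) :
  upstream_closed X -> reachX step X s u -> reachX step X (graft X w s) (graft X w u).
Proof.
move=> Xup; apply: connect_homo => x y /existsP [a /andP [aX xy]].
by apply/existsP; exists a; rewrite aX (step_graft w Xup).
Qed.

Lemma graft_id (X : {set A}) (w u : state S) :
  (forall c, c \in X -> u c = w c) -> graft X w u = w.
Proof. by move=> uw; apply/ffunP => c; rewrite ffunE; case: ifP => // /uw. Qed.

Lemma equilibrium_transfer (X : {set A}) (t t' : state S) :
  upstream_closed X -> (forall c, c \in X -> t c = t' c) ->
  equilibrium X t -> equilibrium X t'.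
Proof.
move=> Xup tt' teq u t'u.
have /teq ut : reachX step X t (graft X t u).
  by move: (reachX_graft t Xup t'u); rewrite graft_id // => c /tt'.
move: (reachX_graft t' Xup ut); rewrite (@graft_id X t' t) //.
suff -> : graft X t' (graft X t u) = u by [].
apply/ffunP => c; rewrite !ffunE; case: ifP => cX; rewrite ?cX //.
exact: reachX_out t'u (negbT cX).
Qed.

Lemma mem_PsiP (X : {set A}) (S' : {set state S}) (s : state S) :
  reflect (s \in Omega step X S' /\ equilibrium X s) (s \in Psi step X S').
Proof.
rewrite [in R in reflect _ R]inE; apply: (iffP andP) => -[sO seq]; split=> //.
  by move=> u; apply/implyP; move/forallP: seq.
by apply/forallP => u; apply/implyP; apply: seq.
Qed.

Lemma Psi_reach_closed (X : {set A}) (S' : {set state S}) (s u : state S) :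
  s \in Psi step X S' -> reachX step X s u -> u \in Psi step X S'.
Proof.
case/mem_PsiP=> sO seq su; apply/mem_PsiP; split.
  move: sO; rewrite !inE => /existsP [s0 /andP [s0S s0s]].
  by apply/existsP; exists s0; rewrite s0S; apply: connect_trans s0s su.
by move=> v uv; apply: connect_trans (seq v (connect_trans su uv)) su.
Qed.

(* The X-equilibria of P := Psi_{X u Y}(S') are kept by a Y-step because the
   step stays inside P and leaves the X-components unchanged. *)
Lemma Mrel_upstream_closed (X Y : {set A}) :
  upstream_closed X -> [disjoint X & Y] -> Mrel step X Y.
Proof.
move=> Xup XY S' /= t t' /mem_PsiP [tO teq] /existsP [a /andP [aY tt']].
set P := Psi step (X :|: Y) S'.
have tP : t \in P.
  move: tO; rewrite inE => /existsP [s /andP [sP st]].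
  exact: Psi_reach_closed sP (reachX_subset (subsetUl X Y) st).
have t'P : t' \in P.
  apply: Psi_reach_closed tP (connect1 _); apply/existsP; exists a.
  by rewrite inE aY orbT.
apply/mem_PsiP; split.
  by rewrite inE; apply/existsP; exists t'; rewrite t'P; apply: connect0.
apply: equilibrium_transfer teq => // c cX.
by apply: step_other tt' _; apply: contraTneq cX => ->; rewrite (disjointFl XY).
Qed.

End Dynamics.

Section TopologicalOrder.
Variables (A : finType) (S : A -> finType) (step : forall a : A, rel (state S)).

Lemma scc_refl (x : A) : x \in scc step x.
Proof. by rewrite inE connect0. Qed.

Lemma scc_eq (x z : A) : z \in scc step x -> scc step z = scc step x.
Proof.
rewrite inE => /andP [xz zx]; apply/setP => y; rewrite !inE.
apply/andP/andP => [[zy yz]|[xy yx]]; split.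
- exact: connect_trans xz zy.
- exact: connect_trans yz zx.
- exact: connect_trans zx xy.
- exact: connect_trans yx xz.
Qed.

Lemma is_scc_disjoint (C D : {set A}) :
  is_scc step C -> is_scc step D -> C != D -> [disjoint C & D].
Proof.
move=> [x xC ->] [y yD ->]; apply: contraNT => /pred0Pn [z /andP [zx zy]].
by rewrite -(scc_eq zx) -(scc_eq zy).
Qed.

Variable Cs : seq {set A}.
Hypothesis Cs_uniq : uniq Cs.
Hypothesis Cs_scc : forall C, C \in Cs -> is_scc step C.
Hypothesis Cs_cover : forall x : A, scc step x \in Cs.
Hypothesis Cs_topo : forall i j k l, i < size Cs -> j < size Cs ->
  k \in nth set0 Cs i -> l \in nth set0 Cs j -> reg step k l -> i != j -> i < j.

Lemma nth_scc_disjoint (i j : nat) :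
  i < j < size Cs -> [disjoint nth set0 Cs i & nth set0 Cs j].
Proof.
case/andP=> ij js; have iCs := ltn_trans ij js.
apply: is_scc_disjoint; [exact/Cs_scc/mem_nth | exact/Cs_scc/mem_nth |].
by rewrite nth_uniq // neq_ltn ij.
Qed.

Lemma prefix_union_upstream_closed (i : nat) :
  i <= size Cs -> upstream_closed step (prefix_union Cs i).
Proof.
move=> isz k l /bigcupP [j _ lj] kl.
have js : j < size Cs := leq_trans (ltn_ord j) isz.
have ms : index (scc step k) Cs < size Cs by rewrite index_mem.
have km : k \in nth set0 Cs (index (scc step k) Cs) by rewrite nth_index ?scc_refl.
have mi : index (scc step k) Cs < i.
  have [->|mj] := eqVneq (index (scc step k) Cs) j; first exact: ltn_ord.
  exact: ltn_trans (Cs_topo ms js km lj kl mj) (ltn_ord j).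
by apply/bigcupP; exists (Ordinal mi).
Qed.

Lemma prefix_union_disjoint (i : nat) :
  i < size Cs -> [disjoint prefix_union Cs i & nth set0 Cs i].
Proof.
move=> isz; rewrite disjoint_sym; apply: bigcup_disjoint => j _.
by rewrite disjoint_sym nth_scc_disjoint // ltn_ord.
Qed.

End TopologicalOrder.

Theorem theorem1 (A : finType) (S : A -> finType)
  (step : forall a : A, rel (state S))
  (HS : forall a, 0 < #|S a|)
  (Hstep1 : forall a, empty_or_total step a)
  (Hstep2 : forall a, local_step step a)
  (Cs : seq {set A})
  (Huniq : uniq Cs)
  (Hscc : forall C, C \in Cs -> is_scc step C)
  (Hcover : forall x : A, scc step x \in Cs)
  (Htopo : forall i j k l, i < size Cs -> j < size Cs ->
      k \in nth set0 Cs i -> l \in nth set0 Cs j ->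
      reg step k l -> i != j -> i < j) :
  modular_organisation step Cs.
Proof.
split; first split.
- by move=> C /Hscc [x xC _]; apply/set0Pn; exists x.
- exact: nth_scc_disjoint Huniq Hscc.
- by move=> a; exists (scc step a); [exact: Hcover | exact: scc_refl].
move=> i isz; apply: Mrel_upstream_closed => //.
- exact (prefix_union_upstream_closed Hcover Htopo (ltnW isz)).
- exact (prefix_union_disjoint Huniq Hscc isz).
Qed.
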